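(* Let $n\ge1$, $0\le c_0<c_1<\dots<c_n$, $v_0\ge v_1\ge\dots\ge v_n>0$, $0\le\rho_k<\frac{v_k}{2}$ ($k=0,\dots,n$), and let $B=(b_{jk})_{j,k=0}^n$ with $b_{jk}=v_k-c_k$ if $j>k$, $b_{kk}=\frac{v_k}{2}-c_k-\rho_k$, $b_{jk}=-c_j$ if $j<k$. For $k=0,\dots,n$ let $B^{(k)}$ be the matrix obtained from $B$ by replacing column $k$ with the all-ones vector $\mathbf{1}_{n+1}$. Then $$\det B^{(n)}=\prod_{j=0}^{n-1}\Big(-\frac{v_j}{2}-\rho_j\Big),$$ and for $k=0,\dots,n-1$, $$\det B^{(k)}=\det(\tilde B_{n-k}+c_kJ_{n-k})\prod_{j=0}^{k-1}\Big(-\frac{v_j}{2}-\rho_j\Big),$$ where $\tilde B_{n-k}$ is the $(n-k)\times(n-k)$ principal submatrix of $B$ situated in the bottom right-hand corner (rows and columns $k+1,\dots,n$) and $J_{n-k}$ is the $(n-k)\times(n-k)$ all-ones matrix.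
   Context: Rows and columns of $B$ are indexed $0,\dots,n$. An empty product equals $1$. *)

From mathcomp Require Import all_boot all_order all_algebra.
Import Order.TTheory GRing.Theory Num.Theory.
Local Open Scope ring_scope.

Definition Bmat {R : fieldType} (n : nat) (c v rho : nat -> R) : 'M[R]_(n.+1) :=
  \matrix_(j < n.+1, k < n.+1)
    if (k < j)%N then v k - c k
    else if j == k then v k / 2 - c k - rho k
    else - c j.

Definition Bcol {R : fieldType} (n : nat) (c v rho : nat -> R) (k : 'I_n.+1)
  : 'M[R]_(n.+1) :=
  \matrix_(i < n.+1, j < n.+1) if j == k then 1 else Bmat n c v rho i j.

Definition Btilde {R : fieldType} (n : nat) (c v rho : nat -> R) (k : nat)
  : 'M[R]_(n - k) :=
  \matrix_(i < n - k, j < n - k) (Bmat n c v rho) (inord (k.+1 + i)) (inord (k.+1 + j)).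

(* Two rounds of elimination make B^(k) block upper triangular.  Subtracting
   row k from every later row clears those rows up to column k (the rows agree
   there: column k is all ones and b_jl = v_l - c_l for l < j does not depend
   on j) and adds c_k to their entries right of column k, because b_kl = -c_k
   for l > k; so the lower-right block becomes B~ + c_k J.  The upper-left
   block is B^(k) for the leading (k+1) x (k+1) block of B, as b_jl does not
   depend on n.  In that matrix, subtracting v_l - c_l times the all-ones last
   column from each column l < k clears everything below the diagonal and
   leaves v_l/2 - c_l - rho_l - (v_l - c_l) = -v_l/2 - rho_l on it. *)

From mathcomp Require Import all_boot all_order all_algebra ring.
Set Implicit Arguments.
Unset Strict Implicit.
Import GRing.Theory Num.Theory.
Local Open Scope ring_scope.

Section ElementaryOperations.
Variable R : comNzRingType.

Lemma det_castmx m p (e : m = p) (A : 'M[R]_m) : \det (castmx (e, e) A) = \det A.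
Proof. by case: p / e; rewrite castmx_id. Qed.

Lemma det_unitrig n (E : 'M[R]_n) :
  is_trig_mx E -> (forall i, E i i = 1) -> \det E = 1.
Proof. by move=> /det_trig-> E1; apply: big1 => i _; rewrite E1. Qed.

Lemma det_sub_col_multiples n (A : 'M[R]_n) (k : 'I_n) (w : 'I_n -> R) :
  (forall j : 'I_n, (k <= j)%N -> w j = 0) ->
  \det (\matrix_(i, j) (A i j - w j * A i k)) = \det A.
Proof.
move=> w0; pose E : 'M[R]_n := \matrix_(i, j) ((i == j)%:R - (i == k)%:R * w j).
have -> : \matrix_(i, j) (A i j - w j * A i k) = A *m E.
  apply/matrixP => i j; rewrite !mxE.
  under eq_bigr do rewrite mxE mulrBr.
  rewrite sumrB (bigD1 j) // [X in _ = _ - X](bigD1 k) //= !big1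
    => [|l /negbTE->|l /negbTE->];
    by rewrite ?(mul0r, mulr0) ?eqxx ?mulr1 ?mul1r ?addr0 // mulrC.
rewrite det_mulmx (det_unitrig (E := E)) ?mulr1 // => [|i]; rewrite ?mxE ?eqxx; last first.
  by case: eqP => [->|_]; rewrite ?(w0 k) ?mulr0 ?mul0r ?subr0.
apply/is_trig_mxP => i j lt_ij; rewrite mxE -val_eqE (ltn_eqF lt_ij).
by case: eqP => [eik|_]; rewrite ?mul0r ?subr0 // w0 ?mulr0 ?subr0 // -eik ltnW.
Qed.

Lemma det_sub_row_multiples n (A : 'M[R]_n) (k : 'I_n) (s : 'I_n -> R) :
  (forall i : 'I_n, (i <= k)%N -> s i = 0) ->
  \det (\matrix_(i, j) (A i j - s i * A k j)) = \det A.
Proof.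
move=> s0; pose F : 'M[R]_n := \matrix_(i, j) ((i == j)%:R - s i * (j == k)%:R).
have -> : \matrix_(i, j) (A i j - s i * A k j) = F *m A.
  apply/matrixP => i j; rewrite !mxE.
  under eq_bigr do rewrite mxE mulrBl.
  rewrite sumrB (bigD1 i) // [X in _ = _ - X](bigD1 k) //= !big1
    => [|l /negbTE->|l];
    rewrite ?(mul0r, mulr0) ?eqxx ?mulr1 ?mul1r ?addr0 //.
  by rewrite eq_sym => /negbTE->; rewrite mul0r.
rewrite det_mulmx (det_unitrig (E := F)) ?mul1r // => [|i]; rewrite ?mxE ?eqxx; last first.
  by case: eqP => [->|_]; rewrite ?(s0 k) ?mul0r ?mulr0 ?subr0.
apply/is_trig_mxP => i j lt_ij; rewrite mxE -val_eqE (ltn_eqF lt_ij).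
by case: eqP => [ejk|_]; rewrite ?mulr0 ?subr0 // s0 ?mul0r ?subr0 // -ejk ltnW.
Qed.

End ElementaryOperations.

Section BorderedMatrix.
Variables (R : fieldType) (c v rho : nat -> R).

Definition Bentry (j k : nat) : R :=
  if (k < j)%N then v k - c k else if j == k then v k / 2 - c k - rho k else - c j.

Lemma BmatE n (i j : 'I_n.+1) : Bmat n c v rho i j = Bentry i j.
Proof. by rewrite mxE. Qed.

Lemma BcolE n (k i j : 'I_n.+1) :
  Bcol n c v rho k i j = if j == k then 1 else Bentry i j.
Proof. by rewrite mxE BmatE. Qed.

Lemma Bentry_below j k : (k < j)%N -> Bentry j k = v k - c k.
Proof. by rewrite /Bentry => ->. Qed.

Lemma Bentry_diag k : Bentry k k = v k / 2 - c k - rho k.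
Proof. by rewrite /Bentry ltnn eqxx. Qed.

Lemma Bentry_above j k : (j < k)%N -> Bentry j k = - c j.
Proof. by move=> lt_jk; rewrite /Bentry ltnNge (ltnW lt_jk) ltn_eqF. Qed.

Lemma BtildeE n k (i j : 'I_(n - k)) :
  Btilde n c v rho k i j = Bentry (k.+1 + i) (k.+1 + j).
Proof.
have shift_lt (l : 'I_(n - k)) : (k.+1 + l < n.+1)%N by rewrite addSn ltnS -ltn_subRL.
by rewrite mxE BmatE !inordK.
Qed.

Lemma det_Bcol_last n : 2%:R != 0 :> R ->
  \det (Bcol n c v rho ord_max) = \prod_(j < n) (- (v j / 2) - rho j).
Proof.
move=> two_neq0; set A := Bcol n c v rho ord_max.
pose w (j : 'I_n.+1) := if (j < n)%N then v j - c j else 0.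
rewrite -(det_sub_col_multiples A (k := ord_max) (w := w)); last first.
  by move=> j; rewrite /w leqNgt => /negbTE->.
have A_last i : A i ord_max = 1 by rewrite BcolE eqxx.
have A_lt i (j : 'I_n.+1) : (j < n)%N -> A i j = Bentry i j.
  by move=> lt_jn; rewrite BcolE -val_eqE /= ltn_eqF.
clearbody A; rewrite -det_tr det_trig; last first.
  apply/is_trig_mxP => i j lt_ij; rewrite !mxE A_last mulr1.
  have lt_in : (i < n)%N := leq_trans lt_ij (ltnSE (ltn_ord j)).
  by rewrite A_lt // Bentry_below // /w lt_in subrr.
rewrite big_ord_recr /= !mxE A_last /w ltnn mul0r subr0 mulr1.
apply: eq_bigr => i _; rewrite !mxE A_last mulr1 A_lt //= Bentry_diag.
by rewrite ltn_ord; field.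
Qed.

Lemma det_Bcol_split n (k : 'I_n.+1) :
  \det (Bcol n c v rho k) =
  \det (Bcol k c v rho ord_max) * \det (Btilde n c v rho k + c k *: const_mx 1).
Proof.
pose s (i : 'I_n.+1) : R := (k < i)%N%:R.
rewrite -(det_sub_row_multiples _ (k := k) (s := s)); last first.
  by move=> i; rewrite /s leqNgt => /negbTE->.
have e : n.+1 = (k.+1 + (n - k))%N by rewrite addSn subnKC // -ltnS.
set D := \matrix_(i, j) _; rewrite -(det_castmx e) -[castmx _ _]submxK.
have dl0 : dlsubmx (castmx (e, e) D) = 0.
  apply/matrixP => i j; rewrite !mxE castmxE mxE !BcolE -!val_eqE /s /=.
  rewrite leq_addr mul1r; case: eqP => [_|/eqP ne_jk]; first by rewrite subrr.
  have lt_jk : (j < k)%N by rewrite ltn_neqAle ne_jk -ltnS ltn_ord.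
  by rewrite !Bentry_below ?subrr // ltn_addr.
rewrite dl0 det_ublock; congr (_ * _); congr (\det _); apply/matrixP => i j.
- rewrite [RHS]BcolE !mxE castmxE mxE !BcolE -!val_eqE /s /=.
  by rewrite ltnNge -ltnS ltn_ord mul0r subr0.
- rewrite [RHS]mxE BtildeE !mxE castmxE mxE !BcolE -!val_eqE /s /=.
  rewrite gtn_eqF ?leq_addr // mul1r (Bentry_above (j := k)) ?leq_addr //.
  by rewrite opprK mulr1.
Qed.

End BorderedMatrix.

Theorem lemma5p3 (R : realFieldType) (n : nat) (c v rho : nat -> R) :
  (1 <= n)%N ->
  0 <= c 0%N ->
  (forall i, (i < n)%N -> c i < c i.+1) ->
  (forall i, (i < n)%N -> v i.+1 <= v i) ->
  0 < v n ->
  (forall k, (k <= n)%N -> 0 <= rho k /\ rho k < v k / 2) ->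
  \det (Bcol n c v rho ord_max) = \prod_(j < n) (- (v j / 2) - rho j)
  /\ (forall k : 'I_n.+1, (k < n)%N ->
        \det (Bcol n c v rho k) =
          \det (Btilde n c v rho k + c k *: const_mx 1)
          * \prod_(j < k) (- (v j / 2) - rho j)).
Proof.
have two_neq0 : 2%:R != 0 :> R by rewrite pnatr_eq0.
move=> _ _ _ _ _ _; split; first exact: det_Bcol_last.
by move=> k _; rewrite det_Bcol_split det_Bcol_last // mulrC.
Qed.
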